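(* Let $X=(V,E,T)$ be a $2$-dimensional $(k_0,k_1)$-regular $(\epsilon,\mu)$-cosystolic expander, let $\frac12<\eta<1$, and let $F\subseteq E$. Suppose $\widetilde\lambda_2(G_0(X))<\frac12$ and $|V|$ is sufficiently large, i.e. $|V|\ge N$ for a threshold $N$ depending only on $\mu$ and $\widetilde\lambda_2(G_0(X))$. Then: (1) for every vertex $v\in V$ with $\frac{k_0}{2}<|F_v|\le\eta k_0$ (a semi-fat vertex), $|\delta(F_v)|\ge\epsilon k_1(1-\eta)k_0$; (2) for every vertex $v\in V$ with $|F_v|\le\frac{k_0}{2}$ (a non-fat vertex), $|\delta(F_v)|\ge\epsilon k_1|F_v|$.
   Context: A $2$-dimensional simplicial complex $X=(V,E,T)$ consists of a finite vertex set $V$, a set $E$ of $2$-element subsets of $V$ and a set $T$ of $3$-element subsets of $V$ such that every $2$-element subset of a triangle lies in $E$. $X$ is $(k_0,k_1)$-regular if every vertex lies in exactly $k_0$ edges and every edge lies in exactly $k_1$ triangles. $G_0(X)=(V,E)$ is the underlying graph and $\widetilde\lambda_2(G_0(X))$ its second largest adjacency eigenvalue divided by $k_0$. For $S\subseteq V$, $\delta(S)$ is the set of edges with exactly one endpoint in $S$; for $F\subseteq E$, $\delta(F)$ is the set of triangles containing an odd number of edges of $F$. $B^0(X)=\{\emptyset,V\}$, $Z^0(X)=\{S\subseteq V:\delta(S)=\emptyset\}$, $B^1(X)=\{\delta(S):S\subseteq V\}$, $Z^1(X)=\{F\subseteq E:\delta(F)=\emptyset\}$. $\mathrm{dist}(A,B)=|A\setminus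 B|+|B\setminus A|$; distance to a family is the minimum over its members. With $X(0)=V$, $X(1)=E$, $X$ is an $(\epsilon,\mu)$-cosystolic expander ($\epsilon,\mu>0$) if for $i\in\{0,1\}$ and all $S\subseteq X(i)$: if $|\delta(S)|=0$ then $S\in B^i(X)$ or $|S|\ge\mu|X(i)|$; otherwise $|\delta(S)|/\mathrm{dist}(S,Z^i(X))\ge\epsilon k_i$. The local view of $v$ with respect to $F$ is $F_v=\{e\in F: v\in e\}$. *)

From HB Require Import structures.
From mathcomp Require Import all_boot all_order all_algebra.
From mathcomp Require Import reals.
Set Implicit Arguments. Unset Strict Implicit. Unset Printing Implicit Defensive.
Import Order.TTheory GRing.Theory Num.Theory.
Local Open Scope ring_scope.

Section Complex.
Variable V : finType.
Variables E T : {set {set V}}.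

Definition is_2complex : Prop :=
  (forall e : {set V}, e \in E -> #|e| = 2%N) /\
  (forall t : {set V}, t \in T -> #|t| = 3%N) /\
  (forall t e : {set V}, t \in T -> e \subset t -> #|e| = 2%N -> e \in E).

Definition regular (k0 k1 : nat) : Prop :=
  (forall v : V, #|[set e in E | v \in e]| = k0) /\
  (forall e : {set V}, e \in E -> #|[set t in T | e \subset t]| = k1).

Definition delta0 (S : {set V}) : {set {set V}} :=
  [set e in E | #|e :&: S| == 1%N].

Definition delta1 (F : {set {set V}}) : {set {set V}} :=
  [set t in T | odd #|[set e in F | e \subset t]|].

Definition B0 (S : {set V}) : bool := (S == set0) || (S == setT).
Definition Z0 (S : {set V}) : bool := delta0 S == set0.
Definition B1 (F : {set {set V}}) : Prop := exists S : {set V}, F = delta0 S.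
Definition Z1 (F : {set {set V}}) : bool := (F \subset E) && (delta1 F == set0).

Definition local_view (F : {set {set V}}) (v : V) : {set {set V}} :=
  [set e in F | v \in e].

(* adjacency matrix of the underlying graph G_0(X), rows/columns indexed
   by 'I_#|V| via the canonical enumeration of V *)
Definition adjmx (R : nzRingType) : 'M[R]_#|V| :=
  \matrix_(i, j) (([set (enum_val i : V); (enum_val j : V)] \in E)%:R).

End Complex.

Definition distS (X : finType) (A B : {set X}) : nat := #|A :\: B| + #|B :\: A|.

(* distance from A to a (nonempty) family P: minimum over its members;
   #|X| is an upper bound for every distance, used as neutral element *)
Definition dist_fam (X : finType) (A : {set X}) (P : pred {set X}) : nat :=
  \big[minn/#|X|]_(Z : {set X} | P Z) distS A Z.

Definition cosystolic (R : realFieldType) (V : finType) (E T : {set {set V}})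
  (k0 k1 : nat) (eps mu : R) : Prop :=
  0 < eps /\ 0 < mu /\
  (forall S : {set V},
     if delta0 E S == set0 then B0 S \/ mu * #|V|%:R <= #|S|%:R
     else eps * k0%:R <= #|delta0 E S|%:R / (dist_fam S (Z0 E))%:R) /\
  (forall F : {set {set V}}, F \subset E ->
     if delta1 T F == set0 then B1 E F \/ mu * #|E|%:R <= #|F|%:R
     else eps * k1%:R <= #|delta1 T F|%:R / (dist_fam F (Z1 E T))%:R).

Definition spectrum (R : realType) (n : nat) (A : 'M[R]_n) (s : seq R) : Prop :=
  sorted (fun x y => y <= x) s /\ char_poly A = \prod_(x <- s) ('X - x%:P).

Definition lambda2_tilde (R : realType) (k0 : nat) (s : seq R) : R :=
  s`_1 / k0%:R.

From HB Require Import structures.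
From mathcomp Require Import all_boot all_order all_algebra.
From mathcomp Require Import reals.
From mathcomp Require Import complex ring lra zify.
Import Order.TTheory GRing.Theory Num.Theory.
Set Implicit Arguments. Unset Strict Implicit. Unset Printing Implicit Defensive.
Local Open Scope ring_scope.

(* A nonempty cocycle Z of X has at least k0 edges.  If Z = delta(S) with S
   neither empty nor V, the expander mixing lemma
     (k0 - lambda2) |S| (|V| - |S|) <= |V| |delta(S)|
   forces |delta(S)| >= k0 once lambda2 < k0/2 and |V| is large (singletons
   and their complements give exactly k0); otherwise Z is not a coboundary
   and |Z| >= mu |E| = mu |V| k0 / 2 >= k0.  So every set F of at most k0
   edges lies at distance >= min(|F|, k0 - |F|) from Z^1(X), and cosystolic
   expansion gives |delta(F)| >= eps k1 min(|F|, k0 - |F|).  For a non-fat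
   local view the minimum is |F_v|; for a semi-fat one it is
   k0 - |F_v| >= (1 - eta) k0. *)

Lemma cards_setI1 (T : finType) (A : {set T}) (x : T) : #|A :&: [set x]| = (x \in A).
Proof.
case: (boolP (x \in A)) => xA; first by rewrite (setIidPr _) ?cards1 // sub1set.
by rewrite setIC (disjoint_setI0 _) ?cards0 // disjoints1.
Qed.

Lemma cards_set2I (T : finType) (x y : T) (A : {set T}) : x != y ->
  #|[set x; y] :&: A| = ((x \in A) + (y \in A))%N.
Proof.
move=> xy; rewrite setIUl cardsU ![[set _] :&: A]setIC setIACA.
have /disjoint_setI0 -> : [disjoint [set x] & [set y]] by rewrite disjoints1 inE.
by rewrite setI0 cards0 subn0 !cards_setI1.
Qed.

Lemma cards2_set2 (T : finType) (e : {set T}) (u : T) :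
  #|e| = 2 -> u \in e -> exists2 w, u != w & e = [set u; w].
Proof.
move=> /eqP /cards2P [a [b [ab ->]]]; rewrite !inE => /orP[] /eqP ->.
  by exists b.
by exists a; rewrite 1?eq_sym // setUC.
Qed.

(** * Quadratic forms of real symmetric matrices *)

Lemma char_poly_conj (F : fieldType) n (P M : 'M[F]_n) : P \in unitmx ->
  char_poly (invmx P *m M *m P) = char_poly M.
Proof.
move=> Pu; rewrite /char_poly /char_poly_mx.
have -> : 'X%:M - map_mx polyC (invmx P *m M *m P) =
    map_mx polyC (invmx P) *m ('X%:M - map_mx polyC M) *m map_mx polyC P.
  rewrite mulmxBr mulmxBl !map_mxM; congr (_ - _).
  by rewrite mul_mx_scalar -scalemxAl -map_mxM mulVmx // map_mx1 scalemx1.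
rewrite !det_mulmx mulrC mulrA -det_mulmx -map_mxM mulmxV // map_mx1 det1.
by rewrite mul1r.
Qed.

Section Spectral.
Local Open Scope sesquilinear_scope.

Lemma char_poly_spectral_diag (C : numClosedFieldType) n (A : 'M[C]_n) :
  A \is normalmx -> char_poly A = \prod_j ('X - (spectral_diag A 0 j)%:P).
Proof.
move=> /orthomx_spectralP {1}->; rewrite char_poly_conj ?spectral_unit //.
rewrite char_poly_trig ?diag_mx_is_trig //.
by apply: eq_bigr => j _; rewrite mxE eqxx mulr1n.
Qed.

Lemma unitary_conj_form (C : numClosedFieldType) n (P D : 'M[C]_n) (u v : 'cV_n) :
  P \is unitarymx -> u^t* *m (invmx P *m D *m P) *m v = (P *m u)^t* *m D *m (P *m v).
Proof. by move=> Pu; rewrite invmx_unitary // trmx_mul map_mxM !mulmxA. Qed.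

Lemma unitary_dot (C : numClosedFieldType) n (P : 'M[C]_n) (u v : 'cV_n) :
  P \is unitarymx -> u^t* *m v = (P *m u)^t* *m (P *m v).
Proof.
move=> Pu; rewrite -[u^t*]mulmx1 -(mulVmx (unitarymx_unit Pu)) -[invmx P]mulmx1.
by rewrite unitary_conj_form // mulmx1.
Qed.

Lemma form_mxE (C : numClosedFieldType) n (u v : 'cV[C]_n) (M : 'M_n) :
  (u^t* *m M *m v) 0 0 = \sum_i \sum_j (u i 0)^* * M i j * v j 0.
Proof.
rewrite mxE; under eq_bigr do rewrite mxE mulr_suml.
rewrite exchange_big; apply: eq_bigr => i _; apply: eq_bigr => j _.
by rewrite !mxE.
Qed.

Lemma diag_form_mxE (C : numClosedFieldType) n (u v : 'cV[C]_n) (d : 'rV_n) :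
  (u^t* *m diag_mx d *m v) 0 0 = \sum_j (u j 0)^* * d 0 j * v j 0.
Proof. by rewrite mul_mx_diag mxE; apply: eq_bigr => j _; rewrite !mxE. Qed.

Lemma dot_mxE (C : numClosedFieldType) n (u v : 'cV[C]_n) :
  (u^t* *m v) 0 0 = \sum_i (u i 0)^* * v i 0.
Proof. by rewrite mxE; apply: eq_bigr => i _; rewrite !mxE. Qed.

End Spectral.

Lemma sorted_count_gt_nth1 (R : realDomainType) (s : seq R) :
  sorted >=%R s -> (count (fun r => (s`_1 < r)%R) s <= 1)%N.
Proof.
case: s => [|a [|b t]] //=; first by rewrite addn0 leq_b1.
move=> /andP[_ sorted_bt]; rewrite ltxx add0n.
have /allP le_b : all (>=%R b) t := order_path_min (rev_trans le_trans) sorted_bt.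
rewrite (eq_in_count (a2 := pred0)) ?count_pred0 ?addn0 ?leq_b1 //.
by move=> r /le_b /= rb; rewrite ltNge rb.
Qed.

(* In an eigenbasis, z is the top eigenvector: it lives on the only coordinate
   where d exceeds l, so a y orthogonal to it vanishes there. *)
Lemma quad_diag_le (C : numClosedFieldType) n (d y z : 'I_n -> C) (k l : C) :
  l \is Num.real -> (forall j, d j \is Num.real) -> l < k ->
  (forall i j, l < d i -> l < d j -> i = j) ->
  (forall j, d j * z j = k * z j) -> (exists j, z j != 0) ->
  \sum_j (y j)^* * z j = 0 ->
  \sum_j (y j)^* * d j * y j <= l * \sum_j (y j)^* * y j.
Proof.
move=> l_real d_real lt_lk top_unique eigen [i0 z_i0] orth.
have d_i0 : d i0 = k := mulIf z_i0 (eigen i0).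
have z_supp j : j != i0 -> z j = 0.
  move=> ji0; apply/eqP; apply: contraR ji0 => zj; apply/eqP.
  by apply: top_unique; rewrite ?d_i0 ?(mulIf zj (eigen j)).
have y_i0 : y i0 = 0.
  move: orth; rewrite (bigD1 i0) //= big1 ?addr0 => [/eqP|j /z_supp ->]; last first.
    by rewrite mulr0.
  by rewrite mulf_eq0 (negbTE z_i0) orbF conjC_eq0 => /eqP.
rewrite mulr_sumr; apply: ler_sum => j _.
case: (eqVneq j i0) => [->|ji0]; first by rewrite y_i0 conjC0 !(mul0r, mulr0).
have d_le : d j <= l.
  rewrite real_leNgt //; apply: contra ji0 => lt_lj; apply/eqP.
  by apply: top_unique; rewrite ?d_i0.
rewrite mulrAC mulrC; apply: ler_wpM2r => //.
by rewrite mulrC mul_conjC_ge0.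
Qed.

Lemma quad_form_shift (R : comPzRingType) n (a : 'I_n -> 'I_n -> R) (c : 'I_n -> R) p q :
  \sum_i \sum_j a i j * (p * c i - q) * (p * c j - q) =
  p ^+ 2 * (\sum_i \sum_j a i j * c i * c j) - p * q * (\sum_i \sum_j a i j * c i)
  - p * q * (\sum_i \sum_j a i j * c j) + q ^+ 2 * (\sum_i \sum_j a i j).
Proof.
rewrite !mulr_sumr -!sumrB -big_split /=; apply: eq_bigr => i _.
rewrite !mulr_sumr -!sumrB -big_split /=; apply: eq_bigr => j _.
ring.
Qed.

Lemma sum_sq_shift_idem (R : comPzRingType) n (c : 'I_n -> R) p q :
  (forall i, c i * c i = c i) ->
  \sum_i (p * c i - q) ^+ 2 = (p ^+ 2 - 2 * p * q) * (\sum_i c i) + q ^+ 2 * n%:R.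
Proof.
move=> c_idem; have -> : q ^+ 2 * n%:R = \sum_(i < n) q ^+ 2.
  by rewrite sumr_const card_ord mulr_natr.
rewrite mulr_sumr -big_split /=; apply: eq_bigr => i _.
have -> : (p * c i - q) ^+ 2 = p ^+ 2 * (c i * c i) - 2 * p * q * c i + q ^+ 2 by ring.
by rewrite c_idem; ring.
Qed.

Section SecondEigenvalue.
Variable R : realType.
Local Notation toC := (real_complex R).

Lemma real_complex_real (r : R) : toC r \is Num.real.
Proof. by apply/complex_realP; exists r. Qed.

Lemma realsym_spectral_decomposition n (A : 'M[R]_n) (s : seq R) :
  A^T = A -> sorted >=%R s -> char_poly A = \prod_(r <- s) ('X - r%:P) ->
  exists (P : 'M[R[i]]_n) (d : 'rV_n),
    [/\ P \is unitarymx, map_mx toC A = invmx P *m diag_mx d *m P,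
         forall j, d 0 j \is Num.real &
         forall i j, toC s`_1 < d 0 i -> toC s`_1 < d 0 j -> i = j].
Proof.
move=> A_sym s_sorted charA; pose Ac := map_mx toC A.
have Ac_herm : Ac \is hermsymmx.
  apply: realsym_hermsym; last by apply/mxOverP => i j; rewrite mxE real_complex_real.
  apply/is_hermitianmxP; rewrite expr0 scale1r.
  by apply/matrixP => i j; rewrite !mxE -{1}A_sym mxE.
have Ac_normal := hermitian_normalmx Ac_herm.
exists (spectralmx Ac), (spectral_diag Ac); split.
- exact: spectral_unitarymx.
- exact/orthomx_spectralP.
- by have /mxOverP := hermitian_spectral_diag_real Ac_herm; apply.
set d := spectral_diag Ac.
have d_perm : perm_eq [seq d 0 j | j <- index_enum 'I_n] [seq toC r | r <- s].
  apply: prod_XsubC_eq; rewrite !big_map -char_poly_spectral_diag //.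
  rewrite -map_char_poly charA rmorph_prod.
  by apply: eq_bigr => r _; apply: map_polyXsubC.
move=> i j lt_i lt_j; apply/eqP; apply: contraT => ij.
have := sorted_count_gt_nth1 s_sorted.
rewrite -(eq_count (fun r => ltcR _ _)) -(count_map toC (fun z => toC s`_1 < z)).
rewrite -(permP d_perm) count_map -sum1_count sum1_card.
by apply: contraTT => _; rewrite -ltnNge; apply/card_gt1P; exists i, j.
Qed.

Lemma quad_le_second_eigenvalue n (A : 'M[R]_n) (s : seq R) (k : R)
    (x : 'I_n -> R) :
  A^T = A -> sorted >=%R s -> char_poly A = \prod_(r <- s) ('X - r%:P) ->
  (forall i, \sum_j A i j = k) -> s`_1 < k -> \sum_i x i = 0 ->
  \sum_i \sum_j A i j * x i * x j <= s`_1 * \sum_i x i ^+ 2.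
Proof.
move=> A_sym s_sorted charA row_sum lt_s1k x_sum.
case: n A x A_sym charA row_sum x_sum => [|n] A x A_sym charA row_sum x_sum.
  by rewrite !big_ord0 mulr0.
have [P [d [P_unitary A_diag d_real top_unique]]] :=
  realsym_spectral_decomposition A_sym s_sorted charA.
pose one : 'cV[R[i]]_n.+1 := const_mx 1.
pose xc : 'cV[R[i]]_n.+1 := \col_i toC (x i).
have one_eigen : map_mx toC A *m one = toC k *: one.
  apply/matrixP => i j; rewrite !mxE -(row_sum i) rmorph_sum mulr1.
  by apply: eq_bigr => l _; rewrite !mxE mulr1.
have P_unit := unitarymx_unit P_unitary.
have Pone_eigen j : d 0 j * (P *m one) j 0 = toC k * (P *m one) j 0.
  have : diag_mx d *m (P *m one) = toC k *: (P *m one).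
    have P_Ac : P *m map_mx toC A = diag_mx d *m P.
      by rewrite [in LHS]A_diag !mulmxA mulmxV ?mul1mx.
    by rewrite mulmxA -P_Ac -mulmxA one_eigen scalemxAr.
  by move=> /matrixP /(_ j 0); rewrite mul_diag_mx !mxE.
have Pone_nz : exists j, (P *m one) j 0 != 0.
  have /matrix0Pn [j [l Pone_jl]] : P *m one != 0.
    apply: contraTneq isT => Pone0; have := congr1 (mulmx (invmx P)) Pone0.
    rewrite mulKmx // mulmx0 => /matrixP /(_ 0 0).
    by rewrite !mxE => /eqP; rewrite oner_eq0.
  by exists j; rewrite ord1 in Pone_jl.
have xc_conj i : (xc i 0)^* = toC (x i).
  by rewrite mxE conj_Creal ?real_complex_real.
have orth : \sum_j ((P *m xc) j 0)^* * (P *m one) j 0 = 0.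
  rewrite -dot_mxE -unitary_dot // dot_mxE.
  under eq_bigr do rewrite xc_conj mxE mulr1.
  by rewrite -rmorph_sum x_sum rmorph0.
have quadE : toC (\sum_i \sum_j A i j * x i * x j) =
    \sum_j ((P *m xc) j 0)^* * d 0 j * (P *m xc) j 0.
  rewrite -diag_form_mxE -unitary_conj_form // -A_diag form_mxE rmorph_sum.
  apply: eq_bigr => i _; rewrite rmorph_sum; apply: eq_bigr => j _.
  by rewrite xc_conj !mxE !rmorphM [_ * toC (x i)]mulrC.
have normE : toC (\sum_i x i ^+ 2) = \sum_j ((P *m xc) j 0)^* * (P *m xc) j 0.
  rewrite -dot_mxE -unitary_dot // dot_mxE rmorph_sum.
  by apply: eq_bigr => i _; rewrite xc_conj mxE rmorphXn expr2.
rewrite -lecR.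
have -> : toC (s`_1 * \sum_i x i ^+ 2) = toC s`_1 * toC (\sum_i x i ^+ 2).
  exact: rmorphM.
rewrite quadE normE.
by apply: (quad_diag_le (k := toC k) (z := fun j => (P *m one) j 0));
  rewrite ?ltcR ?real_complex_real.
Qed.

Lemma expander_mixing_cut n (A : 'M[R]_n) (s : seq R) (k : R) (c : 'I_n -> R) :
  A^T = A -> sorted >=%R s -> char_poly A = \prod_(r <- s) ('X - r%:P) ->
  (forall i, \sum_j A i j = k) -> s`_1 < k -> (forall i, c i * c i = c i) ->
  (k - s`_1) * ((\sum_i c i) * (n%:R - \sum_i c i)) <=
  n%:R * \sum_i \sum_j A i j * c i * (1 - c j).
Proof.
case: n A c => [|n] A c A_sym s_sorted charA row_sum lt_s1k c_idem.
  by rewrite !big_ord0 !(mulr0, mul0r).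
set N : R := n.+1%:R; set m := \sum_i c i; set cut := \sum_i \sum_j _.
have out_deg : \sum_i \sum_j A i j * c i = k * m.
  by rewrite mulr_sumr; apply: eq_bigr => i _; rewrite -mulr_suml row_sum mulrC.
have in_deg : \sum_i \sum_j A i j * c j = k * m.
  rewrite exchange_big mulr_sumr; apply: eq_bigr => j _.
  rewrite -mulr_suml -(row_sum j); congr (_ * _).
  by apply: eq_bigr => i _; rewrite -[in RHS]A_sym mxE.
have inner : \sum_i \sum_j A i j * c i * c j = k * m - cut.
  rewrite -out_deg /cut -sumrB; apply: eq_bigr => i _; rewrite -sumrB.
  by apply: eq_bigr => j _; ring.
have total : \sum_i \sum_j A i j = N * k.
  by under eq_bigr do rewrite row_sum; rewrite sumr_const card_ord mulr_natl.
have x_sum : \sum_i (N * c i - m) = 0.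
  by rewrite sumrB -mulr_sumr sumr_const card_ord -/m mulr_natl subrr.
have := quad_le_second_eigenvalue A_sym s_sorted charA row_sum lt_s1k x_sum.
rewrite quad_form_shift sum_sq_shift_idem // inner out_deg in_deg total -/m => bound.
have N_gt0 : 0 < N by rewrite ltr0n.
rewrite -subr_ge0 -(pmulr_rge0 _ N_gt0); move: bound; rewrite -subr_ge0.
by congr (0 <= _); ring.
Qed.

End SecondEigenvalue.

(** * Edge sets of graphs *)

Lemma le_of_mixing_bound (R : realFieldType) (k n m d lam : R) :
  0 < k -> lam < 1 / 2 -> 4 * (1 - lam) / (1 - 2 * lam) < n ->
  2 <= m -> 2 <= n - m -> (k - lam * k) * (m * (n - m)) <= n * d -> k <= d.
Proof.
move=> k_gt0 lam_lt n_gt m_ge2 nm_ge2 mixing.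
have gap_gt0 : 0 < 1 - 2 * lam by lra.
have n_big : 4 * (1 - lam) < n * (1 - 2 * lam) by rewrite -ltr_pdivrMr.
have cut_ge : 2 * n - 4 <= m * (n - m) by nra.
have n_le : n <= (1 - lam) * (2 * n - 4) by nra.
have : k * n <= n * d.
  apply: le_trans mixing; have -> : k - lam * k = k * (1 - lam) by ring.
  by rewrite -mulrA ler_pM2l //; nra.
by rewrite mulrC ler_pM2l //; lra.
Qed.

Section EdgeSets.
Variables (V : finType) (E : {set {set V}}).
Hypothesis edge_card2 : forall e, e \in E -> #|e| = 2.

Lemma edge_neq (u w : V) : [set u; w] \in E -> u != w.
Proof. by move=> /edge_card2; rewrite cards2; case: (u != w). Qed.

Lemma card_neighbours (u : V) :
  #|[set w | [set u; w] \in E]| = #|[set e in E | u \in e]|.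
Proof.
rewrite -(@card_in_imset _ _ (fun w => [set u; w])); last first.
  move=> w w'; rewrite !inE => /edge_neq uw _ /setP /(_ w).
  by rewrite !inE eqxx orbT eq_sym (negbTE uw) => /esym /eqP.
apply: eq_card => e; rewrite [in RHS]inE; apply/imsetP/andP => [[w]|[eE ue]].
  by rewrite inE => wE ->; rewrite !inE eqxx.
by have [w _ ew] := cards2_set2 (edge_card2 eE) ue; exists w; rewrite ?inE -?ew.
Qed.

Lemma delta0_set1 (u : V) : delta0 E [set u] = [set e in E | u \in e].
Proof. by apply/setP => e; rewrite !inE cards_setI1; case: (u \in e). Qed.

Lemma delta0C (S : {set V}) : delta0 E (~: S) = delta0 E S.
Proof.
apply/setP => e; rewrite !inE; case: (boolP (e \in E)) => //= /edge_card2 e2.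
by rewrite -setDE; move: (cardsID S e); rewrite e2; lia.
Qed.

Lemma delta0_set0 : delta0 E set0 = set0.
Proof. by apply/setP => e; rewrite !inE setI0 cards0 andbF. Qed.

Lemma delta0_setT : delta0 E setT = set0.
Proof.
by apply/setP => e; rewrite !inE setIT; case: (boolP (e \in E)) => // /edge_card2 ->.
Qed.

Lemma card_delta0_arcs (S : {set V}) :
  #|[set p : V * V | [&& [set p.1; p.2] \in E, p.1 \in S & p.2 \notin S]]| =
  #|delta0 E S|.
Proof.
rewrite -(@card_in_imset _ _ (fun p : V * V => [set p.1; p.2])); last first.
  move=> [a b] [a' b']; rewrite !inE /= => /and3P[_ aS bS] /and3P[_ aS' bS'] eq.
  have : a \in [set a'; b'] by rewrite -eq !inE eqxx.
  have : b \in [set a'; b'] by rewrite -eq !inE eqxx orbT.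
  rewrite !inE => /orP[/eqP ba' | /eqP ->] /orP[/eqP -> // | /eqP ab'].
  - by rewrite ba' aS' in bS.
  - by rewrite ba' aS' in bS.
  - by rewrite -ab' aS in bS'.
apply: eq_card => e; rewrite [in RHS]inE; apply/imsetP/andP.
  case=> -[a b]; rewrite inE /= => /and3P[eE aS bS] ->; split => //.
  by rewrite cards_set2I ?(edge_neq eE) // aS (negbTE bS).
case=> eE; have /eqP /cards2P [a [b [ab eab]]] := edge_card2 eE.
rewrite eab cards_set2I //.
case aS: (a \in S); case bS: (b \in S) => // _.
  by exists (a, b); rewrite // inE /= -eab eE aS bS.
by exists (b, a); rewrite /= 1?setUC // inE /= setUC -eab eE aS bS.
Qed.

Lemma adjmx_sym (R : nzRingType) : (adjmx E R)^T = adjmx E R.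
Proof. by apply/matrixP => i j; rewrite !mxE setUC. Qed.

Lemma adjmx_cut (R : nzRingType) (S : {set V}) :
  \sum_i \sum_j adjmx E R i j * (enum_val i \in S)%:R * (1 - (enum_val j \in S)%:R)
  = #|delta0 E S|%:R.
Proof.
rewrite -card_delta0_arcs -sum1dep_card pair_bigA /= natr_sum.
rewrite [RHS](reindex (fun p : 'I_#|V| * 'I_#|V| => (enum_val p.1, enum_val p.2))) /=.
  rewrite [RHS]big_mkcond; apply: eq_bigr => -[i j] _ /=; rewrite mxE.
  by case: ([set _; _] \in E); case: (enum_val i \in S); case: (enum_val j \in S);
    rewrite /= ?(mulr0, mul0r, mulr1, mul1r, subrr, subr0).
by exists (fun p => (enum_rank p.1, enum_rank p.2)) => -[i j] _ /=;
  rewrite ?enum_valK ?enum_rankK.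
Qed.

Variable k0 : nat.
Hypothesis vertex_degree : forall v : V, #|[set e in E | v \in e]| = k0.

Lemma handshake : (2 * #|E| = #|V| * k0)%N.
Proof.
have degree v : (\sum_(e in E) (v \in e : nat) = k0)%N.
  rewrite -(vertex_degree v) -sum1dep_card big_mkcondr.
  by apply: eq_bigr => e _; case: (v \in e).
have incidences : (\sum_(v : V) \sum_(e in E) (v \in e : nat) = \sum_(e in E) #|e|)%N.
  rewrite exchange_big; apply: eq_bigr => e _; rewrite -sum1_card [RHS]big_mkcond.
  by apply: eq_bigr => v _; case: (v \in e).
move: incidences; rewrite (eq_bigr _ (fun v _ => degree v)) sum_nat_const.
rewrite (eq_bigr (fun _ => 2)) ?sum_nat_const => [->|e /edge_card2] //.
exact: mulnC.
Qed.

Lemma adjmx_row_sum (R : nzRingType) i : \sum_j adjmx E R i j = k0%:R.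
Proof.
under eq_bigr do rewrite mxE.
rewrite -natr_sum -(vertex_degree (enum_val i)) -card_neighbours -sum1dep_card.
congr _%:R; rewrite [RHS](reindex (fun j : 'I_#|V| => enum_val j)) /=; last first.
  exact: onW_bij _ (enum_val_bij V).
by rewrite [RHS]big_mkcond; apply: eq_bigr => j _; case: (_ \in E).
Qed.

Section SpectralBound.
Variables (R : realType) (s : seq R).
Hypotheses (s_sorted : sorted >=%R s)
  (charA : char_poly (adjmx E R) = \prod_(r <- s) ('X - r%:P)).

Lemma card_delta0_mixing (S : {set V}) : s`_1 < k0%:R ->
  (k0%:R - s`_1) * (#|S|%:R * (#|V|%:R - #|S|%:R)) <= #|V|%:R * #|delta0 E S|%:R.
Proof.
move=> lt_s1k; pose c (i : 'I_#|V|) : R := (enum_val i \in S)%:R.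
have c_idem i : c i * c i = c i by rewrite /c; case: (_ \in S); rewrite ?mulr1 ?mulr0.
have c_sum : \sum_i c i = #|S|%:R.
  rewrite /c -natr_sum; congr _%:R; rewrite -sum1_card [RHS]big_mkcond /=.
  rewrite [RHS](reindex (fun i : 'I_#|V| => enum_val i)) /=; last first.
    exact: onW_bij _ (enum_val_bij V).
  by apply: eq_bigr => i _; case: (_ \in S).
have := expander_mixing_cut (adjmx_sym R) s_sorted charA (adjmx_row_sum R) lt_s1k c_idem.
by rewrite c_sum adjmx_cut.
Qed.

Lemma k0_le_card_delta0 (S : {set V}) :
  lambda2_tilde k0 s < 1 / 2 ->
  4 * (1 - lambda2_tilde k0 s) / (1 - 2 * lambda2_tilde k0 s) < #|V|%:R ->
  S != set0 -> S != setT -> (k0 <= #|delta0 E S|)%N.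
Proof.
rewrite /lambda2_tilde => lam_lt V_large S_nz S_nT.
case: (posnP k0) => [-> // | k0_gt0].
have k0_gt0' : 0 < k0%:R :> R by rewrite ltr0n.
have s1E : s`_1 = s`_1 / k0%:R * k0%:R by rewrite divfK // gt_eqF.
have lt_s1k : s`_1 < k0%:R by rewrite s1E -[X in _ < X]mul1r ltr_pM2r //; lra.
have [/eqP/cards1P [u ->] | S_n1] := eqVneq #|S| 1%N.
  by rewrite delta0_set1 vertex_degree.
have [/eqP/cards1P [u Su] | Sc_n1] := eqVneq #|~: S| 1%N.
  by rewrite -delta0C Su delta0_set1 vertex_degree.
have S_gt0 : (0 < #|S|)%N by rewrite card_gt0.
have Sc_gt0 : (0 < #|~: S|)%N.
  by rewrite card_gt0; apply: contra S_nT => /eqP Sc0; rewrite -[S]setCK Sc0 setC0.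
rewrite -(ler_nat R); apply: (le_of_mixing_bound (m := #|S|%:R) k0_gt0' lam_lt V_large).
- by rewrite (ler_nat R 2); case: #|S| S_gt0 S_n1 => [|[|]].
- rewrite -(cardsC S) natrD addrAC subrr add0r (ler_nat R 2).
  by case: #|~: S| Sc_gt0 Sc_n1 => [|[|]].
- by rewrite -s1E; apply: card_delta0_mixing.
Qed.

End SpectralBound.

End EdgeSets.

(** * Cosystolic expanders *)

Lemma distS0 (X : finType) (A : {set X}) : distS A set0 = #|A|.
Proof. by rewrite /distS setD0 set0D cards0 addn0. Qed.

Lemma distSxx (X : finType) (A : {set X}) : distS A A = 0%N.
Proof. by rewrite /distS setDv cards0. Qed.

Lemma leq_subn_distS (X : finType) (A B : {set X}) : (#|B| - #|A| <= distS A B)%N.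
Proof.
rewrite leq_subLR /distS -[X in (X <= _)%N](cardsID A B).
exact: leq_add (subset_leq_card (subsetIr _ _)) (leq_addl _ _).
Qed.

Lemma dist_fam_ge (X : finType) (A : {set X}) (P : pred {set X}) (t : nat) :
  (t <= #|X|)%N -> (forall Z, P Z -> t <= distS A Z)%N -> (t <= dist_fam A P)%N.
Proof.
move=> t_le far; apply: (big_ind (fun x => t <= x)%N) => // a b ta tb.
by rewrite leq_min ta tb.
Qed.

Lemma local_view_sub (V : finType) (F : {set {set V}}) (v : V) : local_view F v \subset F.
Proof. by apply/subsetP => e; rewrite inE => /andP[]. Qed.

(* The first term makes [le_of_mixing_bound] apply to every nontrivial
   coboundary, the second makes mu |E| >= k0. *)
Definition vertex_threshold (R : realType) (mu lam : R) : nat :=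
  (Num.truncn (4 * (1 - lam) / (1 - 2 * lam)) + Num.truncn (2 / mu)).+1.

Section CosystolicExpander.
Variables (R : realType) (V : finType) (E T : {set {set V}}) (k0 k1 : nat).
Variables (eps mu : R) (s : seq R).
Hypotheses (X_complex : is_2complex E T) (X_regular : regular E T k0 k1)
  (X_cosystolic : cosystolic E T k0 k1 eps mu) (X_spectrum : spectrum (adjmx E R) s)
  (lambda2_small : lambda2_tilde k0 s < 1 / 2)
  (V_large : (vertex_threshold mu (lambda2_tilde k0 s) <= #|V|)%N).

Let edge_card2 : forall e, e \in E -> #|e| = 2 := X_complex.1.
Let vertex_degree : forall v, #|[set e in E | v \in e]| = k0 := X_regular.1.
Let eps_gt0 : 0 < eps := X_cosystolic.1.
Let mu_gt0 : 0 < mu := X_cosystolic.2.1.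

Lemma k0_le_card_coboundary (S : {set V}) :
  S != set0 -> S != setT -> (k0 <= #|delta0 E S|)%N.
Proof.
have [s_sorted charA] := X_spectrum.
apply: (k0_le_card_delta0 edge_card2 vertex_degree s_sorted charA) => //.
apply: lt_le_trans (truncnS_gt _) _.
by rewrite ler_nat; apply: leq_trans V_large; rewrite ltnS leq_addr.
Qed.

Lemma k0_le_card_cocycle (Z : {set {set V}}) : Z1 E T Z -> Z != set0 -> (k0 <= #|Z|)%N.
Proof.
move=> /andP[Z_sub /eqP Z_cocycle] Z_nz.
have [_ [_ [_ edge_expansion]]] := X_cosystolic.
move: (edge_expansion Z Z_sub); rewrite Z_cocycle eqxx => -[[S Z_cob] | Z_big].
  rewrite Z_cob in Z_nz *; apply: k0_le_card_coboundary; apply: contraNneq Z_nz => ->.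
    by rewrite delta0_set0.
  by rewrite delta0_setT.
rewrite -(ler_nat R); apply: le_trans Z_big.
have card_E : #|E|%:R = #|V|%:R * k0%:R / 2 :> R.
  rewrite -natrM -(handshake edge_card2 vertex_degree) natrM mulrAC.
  by rewrite divff ?mul1r ?pnatr_eq0.
have mu_V : 2 <= mu * #|V|%:R.
  rewrite mulrC -ler_pdivrMr //; apply/ltW/(lt_le_trans (truncnS_gt _)).
  by rewrite ler_nat; apply: leq_trans V_large; rewrite ltnS leq_addl.
rewrite card_E mulrA ler_pdivlMr // [_ * 2]mulrC mulrA.
exact: ler_wpM2r.
Qed.

Lemma cocycle_far_from_small (F : {set {set V}}) (t : nat) :
  (t <= #|F|)%N -> (t + #|F| <= k0)%N -> forall Z, Z1 E T Z -> (t <= distS F Z)%N.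
Proof.
move=> le_tF le_tk Z Z_cocycle.
have [-> | Z_nz] := eqVneq Z set0; first by rewrite distS0.
have := leq_subn_distS F Z; have := k0_le_card_cocycle Z_cocycle Z_nz; lia.
Qed.

Lemma card_delta1_ge (F : {set {set V}}) (t : nat) : F \subset E ->
  (t <= #|F|)%N -> (t + #|F| <= k0)%N -> eps * k1%:R * t%:R <= #|delta1 T F|%:R.
Proof.
move=> F_sub le_tF le_tk.
have [-> | t_gt0] := posnP t; first by rewrite mulr0.
have far := cocycle_far_from_small le_tF le_tk.
have dist_ge : (t <= dist_fam F (Z1 E T))%N.
  by apply: dist_fam_ge far; apply: leq_trans le_tF (max_card _).
have [_ [_ [_ edge_expansion]]] := X_cosystolic.
move: (edge_expansion F F_sub); case: eqP => [F_cocycle | _].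
  have := far F; rewrite /Z1 F_sub F_cocycle eqxx distSxx => /(_ isT).
  by rewrite leqNgt t_gt0.
rewrite ler_pdivlMr ?ltr0n ?(leq_trans t_gt0) //; apply: le_trans.
apply: ler_wpM2l; last by rewrite ler_nat.
exact: mulr_ge0 (ltW eps_gt0) (ler0n _ _).
Qed.

Lemma card_delta1_ge_nonfat (F : {set {set V}}) : F \subset E ->
  #|F|%:R <= k0%:R / 2 :> R -> eps * k1%:R * #|F|%:R <= #|delta1 T F|%:R.
Proof.
move=> F_sub F_small; apply: card_delta1_ge => //.
by rewrite addnn -mul2n -(ler_nat R) natrM mulrC -ler_pdivlMr.
Qed.

Lemma card_delta1_ge_semifat (F : {set {set V}}) (eta : R) : F \subset E -> eta < 1 ->
  (k0%:R / 2 : R) < #|F|%:R <= eta * k0%:R ->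
  eps * k1%:R * (1 - eta) * k0%:R <= #|delta1 T F|%:R.
Proof.
move=> F_sub eta_lt1 /andP[F_half F_le].
have F_le_k0 : (#|F| <= k0)%N.
  rewrite -(ler_nat R); apply: le_trans F_le _.
  exact: ler_piMl (ler0n _ _) (ltW eta_lt1).
have compl_le : (k0 - #|F| <= #|F|)%N.
  rewrite leq_subLR addnn -mul2n; apply: ltnW.
  by rewrite -(ltr_nat R) natrM mulrC -ltr_pdivrMr.
have := card_delta1_ge F_sub compl_le; rewrite subnK // => /(_ (leqnn _)).
apply: le_trans; rewrite -mulrA; apply: ler_wpM2l.
  exact: mulr_ge0 (ltW eps_gt0) (ler0n _ _).
by rewrite natrB // mulrBl mul1r lerD2l lerN2.
Qed.

End CosystolicExpander.

Theorem lemma3p8 (R : realType) :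
  exists N : R -> R -> nat,
  forall (V : finType) (E T : {set {set V}}) (k0 k1 : nat) (eps mu eta : R)
         (s : seq R) (F : {set {set V}}),
    is_2complex E T ->
    regular E T k0 k1 ->
    cosystolic E T k0 k1 eps mu ->
    1 / 2 < eta < 1 ->
    F \subset E ->
    spectrum (@adjmx V E R) s ->
    lambda2_tilde k0 s < 1 / 2 ->
    (N mu (lambda2_tilde k0 s) <= #|V|)%N ->
    (forall v : V,
        (k0%:R / 2 : R) < #|local_view F v|%:R <= eta * k0%:R ->
        eps * k1%:R * (1 - eta) * k0%:R <= #|delta1 T (local_view F v)|%:R) /\
    (forall v : V,
        #|local_view F v|%:R <= k0%:R / 2 :> R ->
        eps * k1%:R * #|local_view F v|%:R <= #|delta1 T (local_view F v)|%:R).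
Proof.
exists (@vertex_threshold R).
move=> V E T k0 k1 eps mu eta s F X_complex X_regular X_cosystolic /andP[_ eta_lt1]
  F_sub X_spectrum lambda2_small V_large.
have Fv_sub v : local_view F v \subset E := subset_trans (local_view_sub F v) F_sub.
have semifat := card_delta1_ge_semifat X_complex X_regular X_cosystolic X_spectrum
  lambda2_small V_large.
have nonfat := card_delta1_ge_nonfat X_complex X_regular X_cosystolic X_spectrum
  lambda2_small V_large.
by split=> v; [apply: semifat | apply: nonfat].
Qed.
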